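(* Let $X=\{x_1,\ldots,x_n\}$ and $y$ be distinct variables, and let $V_n = c_X(\{x_1\},\ldots,\{x_n\},\{y\},\{\neg y\})$, i.e., $c_X$ applied to the formula consisting of the unit clauses $x_1,\ldots,x_n, y, \neg y$, where for a formula $F$ $c_X(F) = \{\gamma \vee \neg a \vee \neg b \mid \gamma \in F\} \cup \{\neg x_i \vee v_i \mid 1\le i\le n\} \cup \{x_i \vee v_i \mid 1\le i\le n\} \cup \{\neg v_1 \vee \cdots \vee \neg v_n \vee a\} \cup \{\neg v_1 \vee \cdots \vee \neg v_n \vee b\}$ with new variables $a,b,v_1,\ldots,v_n$. Then, with branching restricted to $X \cup \{y\}$, the minimum-size DPLL-Mono search trees of $V_n$ have size $2^n - 1$.
   Context: A CNF formula is a finite set of clauses; the empty clause is unsatisfiable. For a partial assignment $I$ (set of literals), $F|I$ is obtained by deleting clauses containing a literal true under $I$ and deleting false literals from remaining clauses. $Var(F)$ is the set of variables of $F$. A binary tree is empty $()$ or a triple $(x~T_1~T_2)$; its size is its number of nodes. $U(F)$ denotes the result of exhaustive unit propagation on $F$. For a set $B$ of variables, a DPLL-Mono search tree (DMST) of $F$ with branching restricted to $B$ is: $()$ if $U(F)$ contains the empty clause; otherwise $(x~T_1~T_2)$ with $x \in B \cap Var(U(F))$, $T_1$ a DMST of $U(F|\{\neg x\})$ and $T_2$ a DMST of $U(F|\{x\})$ (branching restricted to $B$). *)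

From mathcomp Require Import all_boot.
Set Implicit Arguments. Unset Strict Implicit. Unset Printing Implicit Defensive.

(* Variables are natural numbers; a literal is (polarity, variable):
   (true, v) is v, (false, v) is ~v.  Clauses and formulas are represented
   by sequences (read as finite sets; duplicates/order are irrelevant to
   every notion below). *)
Definition var := nat.
Definition lit := (bool * var)%type.
Definition clause := seq lit.
Definition formula := seq clause.

Definition pos (v : var) : lit := (true, v).
Definition neg (v : var) : lit := (false, v).
Definition lneg (l : lit) : lit := (~~ l.1, l.2).

Definition assign (F : formula) (I : seq lit) : formula :=
  [seq [seq l <- C | lneg l \notin I] | C <- F & ~~ has (fun l => l \in I) C].

Definition vars (F : formula) : seq var := flatten [seq [seq l.2 | l <- C] | C <- F].

Definition unit_lit (F : formula) : option lit :=
  match [seq C <- F | size C == 1] with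
  | [:: l] :: _ => Some l
  | _ => None
  end.

(* Each propagation step deletes at least the
   unit clause used, so [size F] steps always suffice to reach the fixpoint
   (a formula containing the empty clause, or without unit clauses). *)
Fixpoint UP_fuel (k : nat) (F : formula) : formula :=
  match k with
  | 0 => F
  | k'.+1 =>
      if [::] \in F then F
      else match unit_lit F with
           | Some l => UP_fuel k' (assign F [:: l])
           | None => F
           end
  end.

Definition U (F : formula) : formula := UP_fuel (size F) F.

Inductive btree : Type :=
| Leaf : btree
| Node : var -> btree -> btree -> btree.

Fixpoint bt_size (T : btree) : nat :=
  match T with
  | Leaf => 0
  | Node _ T1 T2 => (bt_size T1 + bt_size T2).+1
  end.

Inductive dmst (B : seq var) : formula -> btree -> Prop :=
| dmst_leaf F : [::] \in U F -> dmst B F Leaf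
| dmst_node F x T1 T2 :
    [::] \notin U F -> x \in B -> x \in vars (U F) ->
    dmst B (U (assign (U F) [:: neg x])) T1 ->
    dmst B (U (assign (U F) [:: pos x])) T2 ->
    dmst B F (Node x T1 T2).

Definition cX (xs vs : seq var) (a b : var) (F : formula) : formula :=
  [seq C ++ [:: neg a; neg b] | C <- F]
  ++ [seq [:: neg (nth 0 xs i); pos (nth 0 vs i)] | i <- iota 0 (size xs)]
  ++ [seq [:: pos (nth 0 xs i); pos (nth 0 vs i)] | i <- iota 0 (size xs)]
  ++ [:: rcons [seq neg v | v <- vs] (pos a);
         rcons [seq neg v | v <- vs] (pos b)].

Definition Vn (xs vs : seq var) (y a b : var) : formula :=
  cX xs vs a b ([seq [:: pos x] | x <- xs] ++ [:: [:: pos y]; [:: neg y]]).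

(* While some x_i is unset, every clause of V_n, restricted to the current assignment, keeps two
   unassigned literals, so unit propagation is idle.  Setting x_i either way falsifies one of
   x_i \/ v_i and ~x_i \/ v_i, and the unit v_i is then the only propagation.  Hence the formulas
   at the nodes of a search tree are V_n restricted to assignments in which v_i is set exactly
   when x_i is; setting y changes nothing else.  Once all x_i are set, all v_i are true, and
   propagating a and b turns the clauses gamma \/ ~a \/ ~b back into F = {x_1, ..., x_n, y, ~y}
   restricted to the assignment, which unit propagation refutes.  So a search tree over k unset
   x_i has at least 2^k - 1 nodes, a y-branch leading to a child with the same k, and branching
   on the x_i in any order gives exactly 2^k - 1 nodes. *)

From mathcomp Require Import all_boot zify.
Set Implicit Arguments. Unset Strict Implicit. Unset Printing Implicit Defensive.

(** * Unit propagation *)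

Definition up_stable (F : formula) : bool := ([::] \in F) || (unit_lit F == None).

Lemma UP_fuel_stable k F : up_stable F -> UP_fuel k F = F.
Proof. by case: k => //= k /orP[-> | /eqP ->] //; case: ifP. Qed.

Lemma unit_lit_mem F l : unit_lit F = Some l -> [:: l] \in F.
Proof.
rewrite /unit_lit; case E : [seq C <- F | size C == 1] => [|[|l' []] s] // [<-].
by have := mem_head [:: l'] s; rewrite -E mem_filter => /andP[].
Qed.

Lemma unit_lit_cat F1 F2 : {in F1, forall C, size C != 1} ->
  unit_lit (F1 ++ F2) = unit_lit F2.
Proof.
move=> F1_big; rewrite /unit_lit filter_cat.
suff -> : [seq C <- F1 | size C == 1] = [::] by [].
by apply/eqP; rewrite -size_eq0 size_filter -leqn0 leqNgt -has_count; apply/hasPn => C /F1_big.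
Qed.

Lemma unit_lit_first F1 F2 l : [:: l] \in F1 ->
  {in F1, forall C, size C == 1 -> C = [:: l]} -> unit_lit (F1 ++ F2) = Some l.
Proof.
move=> l_in F1_units; rewrite /unit_lit filter_cat.
have : [:: l] \in [seq C <- F1 | size C == 1] by rewrite mem_filter l_in.
case E : [seq C <- F1 | size C == 1] => [|C s] // _.
have : C \in [seq C <- F1 | size C == 1] by rewrite E mem_head.
by rewrite mem_filter => /andP[/F1_units + C_in] => /(_ C_in) ->.
Qed.

Lemma size_assign_unit F l : unit_lit F = Some l -> size (assign F [:: l]) < size F.
Proof.
move=> /unit_lit_mem l_in; rewrite size_map size_filter ltn_neqAle count_size andbT -all_count.
by apply/allPn; exists [:: l]; rewrite //= mem_head.
Qed.

Lemma UP_fuel_up_stable k F : size F <= k -> up_stable (UP_fuel k F).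
Proof.
elim: k F => [|k IHk] F.
  by rewrite leqn0 => /nilP ->.
rewrite /=; case: ifP => [nil_F _ | _ le_Fk]; first by rewrite /up_stable nil_F.
case E : (unit_lit F) => [l|]; last by rewrite /up_stable E orbT.
by apply: IHk; rewrite -ltnS (leq_trans (size_assign_unit E)).
Qed.

Lemma UP_fuel_mono m k F : up_stable (UP_fuel m F) -> m <= k -> UP_fuel k F = UP_fuel m F.
Proof.
elim: m k F => [|m IHm] k F stable_m le_mk; first exact: UP_fuel_stable.
case: k le_mk => // k le_mk /=; move: stable_m => /=.
by case: ifP => // _; case: (unit_lit F) => // l /IHm ->.
Qed.

Lemma U_UP_fuel m F : up_stable (UP_fuel m F) -> U F = UP_fuel m F.
Proof.
move=> stable_m; rewrite /U; case: (leqP m (size F)) => [|/ltnW le_Fm].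
  exact: UP_fuel_mono.
by rewrite (UP_fuel_mono _ le_Fm) // UP_fuel_up_stable.
Qed.

Lemma U_stable F : up_stable F -> U F = F.
Proof. by move=> stable_F; rewrite (U_UP_fuel (m := 0)). Qed.

Lemma U_up_stable F : up_stable (U F).
Proof. exact: UP_fuel_up_stable. Qed.

Lemma U_idem F : U (U F) = U F.
Proof. exact/U_stable/U_up_stable. Qed.

Lemma U_nil F : [::] \in F -> [::] \in U F.
Proof. by move=> nil_F; rewrite U_stable // /up_stable nil_F. Qed.

Lemma U_big F : {in F, forall C, 1 < size C} -> U F = F.
Proof.
move=> F_big; apply: U_stable; apply/orP; right; rewrite -[F]cats0 unit_lit_cat //.
by move=> C /F_big; case: (size C) => [|[]].
Qed.

Lemma U_step F l : [::] \notin F -> unit_lit F = Some l -> U F = U (assign F [:: l]).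
Proof.
move=> /negbTE nil_F unit_F; set G := assign F [:: l].
rewrite (U_UP_fuel (m := (size G).+1)) /= ?nil_F ?unit_F //.
exact: U_up_stable.
Qed.

(** * Partial valuations *)

Lemma lnegK : involutive lneg.
Proof. by case=> [[] ?]. Qed.

Lemma lneg_pos v : lneg (pos v) = neg v. Proof. by []. Qed.
Lemma lneg_neg v : lneg (neg v) = pos v. Proof. by []. Qed.

Lemma lneg_neq (l : lit) : (lneg l == l) = false.
Proof. by case: l => [[] ?]; rewrite xpair_eqE. Qed.

Definition lit_true (r : var -> option bool) (l : lit) : bool := r l.2 == Some l.1.

Definition restrict (F : formula) (r : var -> option bool) : formula :=
  [seq [seq l <- C | ~~ lit_true r (lneg l)] | C <- F & ~~ has (lit_true r) C].

Definition upd (r : nat -> option bool) (z : nat) (c : bool) : nat -> option bool :=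
  fun w => if w == z then Some c else r w.

Lemma mem_vars (F : formula) (C : clause) (l : lit) : C \in F -> l \in C -> l.2 \in vars F.
Proof. by move=> C_in l_in; apply/flattenP; exists [seq m.2 | m <- C]; apply: map_f. Qed.

Lemma assign_cat F1 F2 I : assign (F1 ++ F2) I = assign F1 I ++ assign F2 I.
Proof. by rewrite /assign filter_cat map_cat. Qed.

Lemma restrict_cat F1 F2 r : restrict (F1 ++ F2) r = restrict F1 r ++ restrict F2 r.
Proof. by rewrite /restrict filter_cat map_cat. Qed.

Lemma mem_restrict F r (C : clause) : C \in restrict F r ->
  exists2 C0, C0 \in F & ~~ has (lit_true r) C0 /\ C = [seq l <- C0 | ~~ lit_true r (lneg l)].
Proof. by case/mapP => C0; rewrite mem_filter => /andP[unsat C0_in] ->; exists C0. Qed.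

Lemma in_restrict F r (C0 : clause) : C0 \in F -> ~~ has (lit_true r) C0 ->
  [seq l <- C0 | ~~ lit_true r (lneg l)] \in restrict F r.
Proof. by move=> C0_in unsat; apply: map_f; rewrite mem_filter unsat. Qed.

Lemma restrict_all_sat F r : {in F, forall C, has (lit_true r) C} -> restrict F r = [::].
Proof.
move=> F_sat; apply/nilP; rewrite /nilp size_map size_filter eqn0Ngt -has_count.
by apply/hasPn => C /F_sat; rewrite negbK.
Qed.

Lemma restrict_none F : restrict F (fun _ => None) = F.
Proof.
rewrite /restrict (eq_filter (a2 := predT)) => [|C]; last by apply/hasPn.
rewrite filter_predT -[RHS]map_id; apply: eq_map => C.
by rewrite (eq_filter (a2 := predT)) ?filter_predT.
Qed.

Lemma eq_restrict F r1 r2 : r1 =1 r2 -> restrict F r1 = restrict F r2.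
Proof.
move=> r12; have E l : lit_true r1 l = lit_true r2 l by rewrite /lit_true r12.
rewrite /restrict (eq_filter (a2 := fun C => ~~ has (lit_true r2) C)) => [|C];
  last by rewrite (eq_has E).
by apply: eq_map => C; apply: eq_filter => l; rewrite E.
Qed.

Lemma mem_restrict_unassigned F r (C : clause) (l : lit) :
  C \in restrict F r -> l \in C -> r l.2 = None.
Proof.
case/mem_restrict => C0 _ [/hasPn unsat ->]; rewrite mem_filter => /andP[+ /unsat].
by rewrite /lit_true; case: l => d w /=; case: (r w) => // -[] /=; case: d.
Qed.

Lemma vars_restrict_subset F r : {subset vars (restrict F r) <= vars F}.
Proof.
move=> _ /flattenP[_ /mapP[C /mem_restrict[C0 C0_in [_ ->]] ->] /mapP[l + ->]].
by rewrite mem_filter => /andP[_]; apply: mem_vars.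
Qed.

Lemma vars_restrict F r z : z \in vars (restrict F r) -> r z = None.
Proof.
by case/flattenP => _ /mapP[C C_in ->] /mapP[l l_in ->]; apply: mem_restrict_unassigned C_in l_in.
Qed.

Lemma lit_true_upd r z c (l : lit) : r z = None ->
  lit_true (upd r z c) l = lit_true r l || (l == (c, z)).
Proof.
move=> rz; case: l => d w; rewrite /lit_true /upd /= xpair_eqE.
case: (w =P z) => [->|_] /=; last by rewrite andbF orbF.
by rewrite rz andbT eq_sym.
Qed.

Lemma assign_restrict F r z c : r z = None ->
  assign (restrict F r) [:: (c, z)] = restrict F (upd r z c).
Proof.
move=> rz; have lit_upd := lit_true_upd c ^~ rz.
have cz_kept C : (c, z) \in [seq l <- C | ~~ lit_true r (lneg l)] = ((c, z) \in C).
  by rewrite mem_filter /lit_true /= rz.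
rewrite /assign /restrict filter_map -map_comp -filter_predI.
rewrite (eq_filter (a2 := fun C => ~~ has (lit_true (upd r z c)) C)) => [|C]; last first.
  rewrite /= (eq_has (a2 := pred1 (c, z))) => [|l]; last exact: mem_seq1.
  by rewrite has_pred1 cz_kept (eq_has lit_upd) has_predU has_pred1 negb_or andbC.
apply: eq_map => C /=; rewrite -filter_predI; apply: eq_filter => l /=.
by rewrite lit_upd mem_seq1 negb_or andbC.
Qed.

(** * Guarding a formula by ~a \/ ~b *)

Definition guard (a b : var) (F : formula) : formula :=
  [seq C ++ [:: neg a; neg b] | C <- F].

Lemma restrict_guard F r a b : r a = None -> r b = None ->
  restrict (guard a b F) r = guard a b (restrict F r).
Proof.
move=> ra rb; rewrite /restrict /guard filter_map -!map_comp.
rewrite (eq_filter (a2 := fun C => ~~ has (lit_true r) C)) => [|C]; last first.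
  by rewrite /preim /= has_cat /= /lit_true /= ra rb !orbF.
by apply: eq_map => C /=; rewrite filter_cat /= /lit_true /= ra rb.
Qed.

Lemma guard_big a b H : {in guard a b H, forall C, 1 < size C}.
Proof. by move=> _ /mapP[C _ ->]; rewrite size_cat addn2. Qed.

Lemma assign_catr (H : formula) (L : clause) (l : lit) :
  l.2 \notin vars H -> ~~ has (fun m => m \in [:: l]) L ->
  assign [seq C ++ L | C <- H] [:: l] = [seq C ++ [seq m <- L | lneg m \notin [:: l]] | C <- H].
Proof.
move=> l_fresh L_unsat.
have C_indep C m : C \in H -> m \in C -> (m.2 == l.2) = false.
  by move=> C_in m_in; apply: contraNF l_fresh => /eqP <-; apply: mem_vars C_in m_in.
rewrite /assign filter_map -map_comp.
rewrite (eq_in_filter (a2 := predT)) ?filter_predT => [|C C_in]; last first.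
  rewrite /preim /= has_cat negb_or L_unsat andbT; apply/hasPn => m m_in.
  by rewrite mem_seq1; apply: contraFN (C_indep C m C_in m_in) => /eqP ->.
apply/eq_in_map => C C_in /=; rewrite filter_cat; congr (_ ++ _).
apply/all_filterP/allP => m m_in; rewrite mem_seq1.
by apply: contraFN (C_indep C m C_in m_in) => /eqP <-.
Qed.

(* Propagating a leaves every clause of H followed by ~b.  If H contains the empty clause, this
   yields the unit ~b, which falsifies the clause b; otherwise b is the only unit, and propagating
   it gives back H. *)
Lemma U_guard H a b : a != b -> a \notin vars H -> b \notin vars H -> [::] \in U H ->
  [::] \in U (guard a b H ++ [:: [:: pos a]; [:: pos b]]).
Proof.
move=> ab aH bH nil_UH.
have after_a : assign (guard a b H ++ [:: [:: pos a]; [:: pos b]]) [:: pos a]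
    = [seq C ++ [:: neg b] | C <- H] ++ [:: [:: pos b]].
  rewrite assign_cat assign_catr //= /assign /lneg /neg /pos /= !inE !xpair_eqE /=.
  by rewrite eqxx eq_sym (negbTE ab).
rewrite (U_step (l := pos a)) ?after_a; first last.
- by rewrite unit_lit_cat // => C /guard_big; case: (size C) => [|[]].
- by rewrite mem_cat negb_or !inE andbT; apply: contraTN isT => /guard_big.
have guard_b_nonempty : {in [seq C ++ [:: neg b] | C <- H], forall C, 0 < size C}.
  by move=> _ /mapP[C _ ->]; rewrite size_cat addn1.
have nil_notin : [::] \notin [seq C ++ [:: neg b] | C <- H] ++ [:: [:: pos b]].
  by rewrite mem_cat negb_or !inE andbT; apply: contraTN isT => /guard_b_nonempty.
have [nil_H | nil_H] := boolP ([::] \in H).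
  rewrite (U_step (l := neg b)) //; last first.
    apply: unit_lit_first => [|_ /mapP[C _ ->]]; first by apply/mapP; exists [::].
    by rewrite size_cat addn1 eqSS size_eq0 => /eqP ->.
  by apply: U_nil; rewrite assign_cat mem_cat /assign /= !inE /lneg /neg /pos /= eqxx orbT.
rewrite (U_step (l := pos b)) //; last first.
  rewrite unit_lit_cat // => _ /mapP[C C_in ->].
  by rewrite size_cat addn1 eqSS size_eq0; apply: contraNN nil_H => /eqP <-.
rewrite assign_cat assign_catr //= /assign /lneg /neg /pos /= !inE eqxx /= cats0.
by rewrite (eq_map (g := id)) ?map_id // => C; rewrite cats0.
Qed.

Lemma U_contradiction (l : lit) : [::] \in U [:: [:: l]; [:: lneg l]].
Proof.
rewrite (U_step (l := l)) //=; apply: U_nil.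
by rewrite /assign /= !mem_seq1 eqxx lneg_neq /= lnegK mem_head.
Qed.

Lemma base_refuted (xs : seq var) (y : var) (r : var -> option bool) :
  {in xs, forall x, r x != None} ->
  [::] \in U (restrict ([seq [:: pos x] | x <- xs] ++ [:: [:: pos y]; [:: neg y]]) r).
Proof.
move=> xs_set; rewrite restrict_cat.
have [/hasP[x x_in /eqP rx] | /hasPn xs_true] := boolP (has (fun x => r x == Some false) xs).
  apply/U_nil; rewrite mem_cat; apply/orP; left.
  have := in_restrict (map_f (fun x => [:: pos x]) x_in) (r := r).
  by rewrite /= /lit_true /= rx; apply.
rewrite restrict_all_sat => [/= | _ /mapP[x x_in ->]]; last first.
  by rewrite /= /lit_true /= orbF; move: (xs_set x x_in) (xs_true x x_in); case: (r x) => [[]|].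
case ry : (r y) => [c|].
  by apply/U_nil; case: c ry => ry; rewrite /restrict /= /lit_true /= ry /= ?ry.
have -> : restrict [:: [:: pos y]; [:: neg y]] r = [:: [:: pos y]; [:: neg y]].
  by rewrite /restrict /lit_true /= ry /= ry.
exact: (U_contradiction (pos y)).
Qed.

(** * Search trees of V_n *)

Lemma dmst_U B F T : dmst B F T -> dmst B (U F) T.
Proof.
case=> {F T} [F nil_UF | F x T1 T2 nil_UF xB xUF dT1 dT2].
  by apply: dmst_leaf; rewrite U_idem.
by apply: dmst_node; rewrite ?U_idem.
Qed.

Section Vn_search.

Variables (n : nat) (xs vs : seq var) (y a b : var).
Hypotheses (size_xs : size xs = n) (size_vs : size vs = n)
  (vars_uniq : uniq (xs ++ [:: y; a; b] ++ vs)).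

Local Notation X i := (nth 0 xs i).
Local Notation W i := (nth 0 vs i).
Local Notation V := (Vn xs vs y a b).

Lemma xs_uniq : uniq xs.
Proof. by move: vars_uniq; rewrite cat_uniq => /and3P[]. Qed.

Lemma vs_uniq : uniq vs.
Proof. by move: vars_uniq; rewrite !cat_uniq => /and3P[_ _ /and3P[]]. Qed.

Lemma yab_uniq : uniq [:: y; a; b].
Proof. by move: vars_uniq; rewrite !cat_uniq => /and3P[_ _ /andP[]]. Qed.

Lemma notin_xs w : w \in [:: y; a; b] ++ vs -> w \notin xs.
Proof. by move: vars_uniq; rewrite cat_uniq => /and3P[_ /hasPn xs_fresh _] /xs_fresh. Qed.

Lemma notin_vs w : w \in [:: y; a; b] -> w \notin vs.
Proof.
move: vars_uniq; rewrite !cat_uniq => /and3P[_ _ /and3P[_ /hasPn vs_fresh _]] w_in.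
by apply: contraL w_in => /vs_fresh.
Qed.

Definition base : formula := [seq [:: pos x] | x <- xs] ++ [:: [:: pos y]; [:: neg y]].

Definition xv_clauses : formula :=
  [seq [:: neg (X i); pos (W i)] | i <- iota 0 n] ++
  [seq [:: pos (X i); pos (W i)] | i <- iota 0 n].

Definition vab_clauses : formula :=
  [:: rcons [seq neg v | v <- vs] (pos a); rcons [seq neg v | v <- vs] (pos b)].

Lemma Vn_split : V = guard a b base ++ xv_clauses ++ vab_clauses.
Proof. by rewrite /Vn /cX size_xs !catA. Qed.

Definition state (px pw : nat -> option bool) (py : option bool) : var -> option bool :=
  fun w => if w \in xs then px (index w xs) else if w \in vs then pw (index w vs)
           else if w == y then py else None.

Section State.

Variables (px pw : nat -> option bool) (py : option bool).

Lemma state_X i : i < n -> state px pw py (X i) = px i.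
Proof. by move=> lt_in; rewrite /state mem_nth ?index_uniq ?size_xs ?xs_uniq. Qed.

Lemma state_W i : i < n -> state px pw py (W i) = pw i.
Proof.
move=> lt_in; have W_in : W i \in vs by rewrite mem_nth ?size_vs.
have W_notin : W i \notin xs by apply: notin_xs; rewrite mem_cat W_in orbT.
by rewrite /state (negbTE W_notin) W_in index_uniq ?size_vs ?vs_uniq.
Qed.

Lemma state_y : state px pw py y = py.
Proof.
have y_yab : y \in [:: y; a; b] by rewrite mem_head.
by rewrite /state (negbTE (notin_xs _)) ?(negbTE (notin_vs y_yab)) ?eqxx ?mem_cat ?y_yab.
Qed.

Lemma state_ab w : w \in [:: a; b] -> state px pw py w = None.
Proof.
move=> w_ab; have w_yab : w \in [:: y; a; b] by rewrite inE w_ab orbT.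
have w_xs : w \notin xs by apply: notin_xs; rewrite mem_cat w_yab.
rewrite /state (negbTE w_xs) (negbTE (notin_vs w_yab)).
have /negbTE -> // : w != y.
by move: yab_uniq w_ab; rewrite /= !inE => /andP[/norP[ya yb] _] /orP[] /eqP ->; rewrite eq_sym.
Qed.

Lemma state_a : state px pw py a = None.
Proof. by rewrite state_ab ?mem_head. Qed.

Lemma state_b : state px pw py b = None.
Proof. by rewrite state_ab // !inE eqxx orbT. Qed.

End State.

Lemma eq_state px1 px2 pw1 pw2 py :
  px1 =1 px2 -> pw1 =1 pw2 -> state px1 pw1 py =1 state px2 pw2 py.
Proof. by move=> E1 E2 w; rewrite /state E1 E2. Qed.

Lemma upd_state_X px pw py j c :
  j < n -> upd (state px pw py) (X j) c =1 state (upd px j c) pw py.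
Proof.
move=> lt_jn w; rewrite /upd; case: (w =P X j) => [-> | w_X]; first by rewrite state_X // eqxx.
rewrite /state; case: ifP => // w_in; case: eqP => // idx_j.
by case: w_X; rewrite -idx_j nth_index.
Qed.

Lemma upd_state_W px pw py j c :
  j < n -> upd (state px pw py) (W j) c =1 state px (upd pw j c) py.
Proof.
move=> lt_jn w; rewrite /upd; case: (w =P W j) => [-> | w_W]; first by rewrite state_W // eqxx.
rewrite /state; case: ifP => // _; case: ifP => // w_in; case: eqP => // idx_j.
by case: w_W; rewrite -idx_j nth_index.
Qed.

Lemma upd_state_y px pw py c : upd (state px pw py) y c =1 state px pw (Some c).
Proof.
move=> w; rewrite /upd; case: (w =P y) => [-> | /eqP/negbTE w_y]; first by rewrite state_y.
by rewrite /state w_y.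
Qed.

Definition forced (p : nat -> option bool) : nat -> option bool :=
  fun i => if p i is Some _ then Some true else None.

Lemma forced_upd p j c : forced (upd p j c) =1 upd (forced p) j true.
Proof. by move=> i; rewrite /forced /upd; case: eqP. Qed.

(* The nodes of a search tree: v_i is set, to true, exactly when x_i is. *)
Definition closed_state (p : nat -> option bool) (py : option bool) := state p (forced p) py.

Lemma restrict_Vn px pw py : restrict V (state px pw py) =
  guard a b (restrict base (state px pw py)) ++ restrict xv_clauses (state px pw py)
  ++ restrict vab_clauses (state px pw py).
Proof.
rewrite Vn_split !(restrict_cat (guard _ _ _), restrict_cat xv_clauses).
by rewrite restrict_guard ?state_a ?state_b.
Qed.

Lemma xv_clauses_small (px pw : nat -> option bool) py (C : clause) :
  (forall i, i < n -> pw i != Some false) ->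
  C \in restrict xv_clauses (state px pw py) -> size C <= 1 ->
  exists2 i, i < n & [/\ C = [:: pos (W i)], pw i = None & px i != None].
Proof.
move=> pw_not_false /mem_restrict[C0 C0_in [unsat ->]]; move: C0_in unsat.
rewrite mem_cat => /orP[] /mapP[i]; rewrite mem_iota => /andP[_ lt_in] ->;
  move: (pw_not_false i lt_in); rewrite /lit_true /= state_X // state_W //;
  by case pxi: (px i) => [[]|]; case pwi: (pw i) => [[]|] //= *; exists i; rewrite ?pxi ?pwi.
Qed.

Lemma xv_clauses_unit (px pw : nat -> option bool) py j c : j < n -> pw j = None -> px j = Some c ->
  [:: pos (W j)] \in restrict xv_clauses (state px pw py).
Proof.
move=> lt_jn pwj pxj; have j_iota : j \in iota 0 n by rewrite mem_iota.
case: c pxj => pxj.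
  have C_xv : [:: neg (X j); pos (W j)] \in xv_clauses by rewrite mem_cat map_f.
  have := in_restrict C_xv (r := state px pw py).
  by rewrite /lit_true /= state_X // state_W // pwj pxj /=; apply.
have C_xv : [:: pos (X j); pos (W j)] \in xv_clauses by rewrite mem_cat map_f ?orbT.
have := in_restrict C_xv (r := state px pw py).
by rewrite /lit_true /= state_X // state_W // pwj pxj /=; apply.
Qed.

Lemma xv_clauses_sat (px pw : nat -> option bool) py : (forall i, i < n -> pw i = Some true) ->
  restrict xv_clauses (state px pw py) = [::].
Proof.
move=> pw_true; apply: restrict_all_sat => C.
by rewrite mem_cat => /orP[] /mapP[i]; rewrite mem_iota => /andP[_ lt_in] ->;
  rewrite /= /lit_true /= state_W // pw_true // eqxx orbT.
Qed.

Lemma vab_clauses_big (px pw : nat -> option bool) py j : j < n -> pw j = None ->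
  {in restrict vab_clauses (state px pw py), forall C, 1 < size C}.
Proof.
move=> lt_jn pwj C /mem_restrict[C0 + [_ ->]].
have Wj_kept :
    neg (W j) \in [seq l <- [seq neg v | v <- vs] | ~~ lit_true (state px pw py) (lneg l)].
  by rewrite mem_filter lneg_neg /lit_true /= state_W // pwj map_f // mem_nth ?size_vs.
have [na nb] : ~~ lit_true (state px pw py) (neg a) /\ ~~ lit_true (state px pw py) (neg b).
  by rewrite /lit_true state_a state_b.
by rewrite !inE => /orP[] /eqP ->; rewrite filter_rcons lneg_pos ?na ?nb size_rcons ltnS lt0n;
  apply: contraTneq Wj_kept => /size0nil ->.
Qed.

Lemma vab_clauses_units (px pw : nat -> option bool) py : (forall i, i < n -> pw i = Some true) ->
  restrict vab_clauses (state px pw py) = [:: [:: pos a]; [:: pos b]].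
Proof.
move=> pw_true.
have v_true v : v \in vs -> state px pw py v = Some true.
  by move=> v_in; rewrite -(nth_index 0 v_in) state_W ?pw_true // -size_vs index_mem.
have negs_unsat : ~~ has (lit_true (state px pw py)) [seq neg v | v <- vs].
  by apply/hasPn => _ /mapP[v /v_true rv ->]; rewrite /lit_true /= rv.
have negs_false : [seq l <- [seq neg v | v <- vs] | ~~ lit_true (state px pw py) (lneg l)] = [::].
  apply/nilP; rewrite /nilp size_filter eqn0Ngt -has_count.
  by apply/hasPn => _ /mapP[v /v_true rv ->]; rewrite /lit_true /= rv.
have [pa pb na nb] : [/\ ~~ lit_true (state px pw py) (pos a), ~~ lit_true (state px pw py) (pos b),
    ~~ lit_true (state px pw py) (neg a) & ~~ lit_true (state px pw py) (neg b)].
  by rewrite /lit_true state_a state_b.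
by rewrite /restrict /= !has_rcons (negbTE negs_unsat) (negbTE pa) (negbTE pb) /= !filter_rcons
  negs_false !lneg_pos (negbTE na) (negbTE nb).
Qed.

Lemma vars_base : {subset vars base <= y :: xs}.
Proof.
move=> _ /flattenP[_ /mapP[C C_in ->] /mapP[l l_in ->]].
move: C_in; rewrite mem_cat !inE => /orP[/mapP[x x_in C_def] | /orP[] /eqP C_def];
  by move: l_in; rewrite C_def mem_seq1 => /eqP -> /=; rewrite ?x_in ?orbT ?eqxx.
Qed.

Lemma ab_notin_vars_base r w : w \in [:: a; b] -> w \notin vars (restrict base r).
Proof.
move=> w_ab; apply/negP => /vars_restrict_subset /vars_base; rewrite inE => /orP[/eqP w_y | w_xs].
  by move: yab_uniq w_ab; rewrite w_y /= !inE => /andP[/negbTE ->].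
by move: w_xs; apply/negP/notin_xs; rewrite mem_cat inE w_ab orbT.
Qed.

Definition free (p : nat -> option bool) : nat := #|[set i : 'I_n | p i == None]|.

Lemma free_gt0 p : 0 < free p -> exists2 j, j < n & p j = None.
Proof. by rewrite card_gt0 => /set0Pn[i]; rewrite inE => /eqP pi; exists i. Qed.

Lemma free_eq0 p : free p = 0 -> forall i, i < n -> p i != None.
Proof.
move=> /eqP; rewrite cards_eq0 => /eqP free_set0 i lt_in; apply/eqP => pi.
by have := in_set0 (Ordinal lt_in); rewrite -free_set0 inE pi.
Qed.

Lemma free_upd p j c : j < n -> p j = None -> free (upd p j c) = (free p).-1.
Proof.
move=> lt_jn pj; rewrite /free [in RHS](cardsD1 (Ordinal lt_jn)) inE /= pj eqxx add1n /=.
apply: eq_card => i; rewrite !inE /upd -val_eqE /=.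
by case: (_ =P j).
Qed.

Lemma free_none : free (fun _ => None) = n.
Proof. by rewrite -[RHS]card_ord -cardsT; congr #|_|; apply/setP => i; rewrite !inE. Qed.

Lemma forced_not_false p i : forced p i != Some false.
Proof. by rewrite /forced; case: (p i). Qed.

Lemma closed_big p py : 0 < free p -> {in restrict V (closed_state p py), forall C, 1 < size C}.
Proof.
move=> /free_gt0[j lt_jn pj] C; rewrite restrict_Vn !mem_cat => /or3P[|C_xv|C_v].
- exact: guard_big.
- rewrite ltnNge; apply/negP.
  move=> /(xv_clauses_small (fun i _ => forced_not_false p i) C_xv)[i _ [_]].
  by rewrite /forced; case: (p i).
- by apply: (vab_clauses_big lt_jn _ C_v); rewrite /forced pj.
Qed.

Lemma closed_stable p py :
  0 < free p -> U (restrict V (closed_state p py)) = restrict V (closed_state p py).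
Proof. by move=> free_pos; apply/U_big/closed_big. Qed.

Lemma closed_refuted p py : free p = 0 -> [::] \in U (restrict V (closed_state p py)).
Proof.
move=> /free_eq0 p_set.
have forced_true i : i < n -> forced p i = Some true.
  by move=> /p_set; rewrite /forced; case: (p i).
rewrite /closed_state restrict_Vn xv_clauses_sat // vab_clauses_units //.
apply: U_guard; rewrite ?ab_notin_vars_base ?inE ?eqxx ?orbT //.
  by move: yab_uniq; rewrite /= !inE => /and3P[].
apply: base_refuted => x x_in.
by rewrite -(nth_index 0 x_in) state_X ?p_set // -size_xs index_mem.
Qed.

(* Setting x_j falsifies one of the two clauses linking x_j to v_j and leaves the unit v_j. *)
Lemma unit_after_x p py j c : j < n -> p j = None ->
  [::] \notin restrict V (state (upd p j c) (forced p) py) /\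
  unit_lit (restrict V (state (upd p j c) (forced p) py)) = Some (pos (W j)).
Proof.
move=> lt_jn pj; have fj : forced p j = None by rewrite /forced pj.
have small_is_unit C : C \in restrict xv_clauses (state (upd p j c) (forced p) py) ->
    size C <= 1 -> C = [:: pos (W j)].
  move=> C_xv /(xv_clauses_small (fun i _ => forced_not_false p i) C_xv)[i _ [-> fi pi]].
  case: (i =P j) => [-> // | /eqP/negbTE ne].
  by move: fi pi; rewrite /forced /upd ne; case: (p i).
have unit_in : [:: pos (W j)] \in restrict xv_clauses (state (upd p j c) (forced p) py).
  by apply: (xv_clauses_unit _ lt_jn fj); rewrite /upd eqxx.
have v_big := @vab_clauses_big (upd p j c) (forced p) py j lt_jn fj.
rewrite restrict_Vn; split.
  rewrite !mem_cat !negb_or; apply/and3P; split; apply/negP.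
  - by move/guard_big.
  - by move/small_is_unit/(_ isT).
  - by move/v_big.
rewrite unit_lit_cat => [|C /guard_big]; last by case: (size C) => [|[]].
by apply: unit_lit_first => // C C_in /eqP sizeC; apply: small_is_unit; rewrite ?sizeC.
Qed.

Lemma branch_x p py j c : j < n -> p j = None ->
  U (assign (restrict V (closed_state p py)) [:: (c, X j)]) =
  U (restrict V (closed_state (upd p j c) py)).
Proof.
move=> lt_jn pj; have fj : forced p j = None by rewrite /forced pj.
have [nil_notin unit_Wj] := unit_after_x py c lt_jn pj.
rewrite /closed_state assign_restrict ?state_X // (eq_restrict _ (upd_state_X _ _ _ _ lt_jn)).
rewrite (U_step nil_notin unit_Wj) assign_restrict ?state_W //.
rewrite (eq_restrict _ (upd_state_W _ _ _ _ lt_jn)); congr (U _); apply: eq_restrict.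
by apply: eq_state => // i; rewrite forced_upd.
Qed.

Lemma branch_y p c :
  assign (restrict V (closed_state p None)) [:: (c, y)] = restrict V (closed_state p (Some c)).
Proof.
by rewrite /closed_state assign_restrict ?state_y // (eq_restrict _ (upd_state_y _ _ _ _)).
Qed.

Lemma free_x_in_vars p py j : j < n -> p j = None -> X j \in vars (restrict V (closed_state p py)).
Proof.
move=> lt_jn pj; have fj : forced p j = None by rewrite /forced pj.
have C_xv : [:: neg (X j); pos (W j)] \in xv_clauses by rewrite mem_cat map_f ?mem_iota.
have := in_restrict C_xv (r := state p (forced p) py).
rewrite /lit_true /= state_X // state_W // pj fj /= => /(_ isT) C_in.
apply: (mem_vars (C := [:: neg (X j); pos (W j)]) (l := neg (X j))); last exact: mem_head.
by rewrite /closed_state restrict_Vn !mem_cat C_in orbT.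
Qed.

Lemma dmst_lower F T : dmst (rcons xs y) F T ->
  forall p py, U F = U (restrict V (closed_state p py)) -> 2 ^ free p - 1 <= bt_size T.
Proof.
elim=> {F T} [F nil_UF | F x T1 T2 _ xB xUF _ IH1 _ IH2] p py UF.
  have [-> // | free_pos] := posnP (free p).
  by move: nil_UF; rewrite UF closed_stable // => /(closed_big free_pos).
have [-> // | free_pos] := posnP (free p).
rewrite UF closed_stable // in xUF IH1 IH2; rewrite !U_idem in IH1 IH2.
have x_free := vars_restrict xUF.
move: xB; rewrite mem_rcons inE => /orP[/eqP x_y | x_xs].
  move: x_free IH1; rewrite x_y /closed_state state_y => ->.
  move=> /(_ p (Some false)); rewrite branch_y => /(_ erefl) le1.
  by apply: leq_trans le1 (leqW (leq_addr _ _)).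
set j := index x xs; have lt_jn : j < n by rewrite -size_xs index_mem.
have x_X : x = X j by rewrite nth_index.
have pj : p j = None by move: x_free; rewrite x_X /closed_state state_X.
rewrite x_X in IH1 IH2.
have := IH1 (upd p j false) py; rewrite branch_x // free_upd // => /(_ erefl) le1.
have := IH2 (upd p j true) py; rewrite branch_x // free_upd // => /(_ erefl) le2.
by move: free_pos le1 le2; case: (free p) => // f _; rewrite expnS /=; lia.
Qed.

Lemma dmst_upper p py :
  exists T, dmst (rcons xs y) (restrict V (closed_state p py)) T /\ bt_size T = 2 ^ free p - 1.
Proof.
move: {2}(free p) (erefl (free p)) => f; elim: f p => [|f IH] p free_p.
  by exists Leaf; split; [apply: dmst_leaf; apply: closed_refuted | rewrite free_p].
have free_pos : 0 < free p by rewrite free_p.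
have [j lt_jn pj] := free_gt0 free_pos.
have free_pj c : free (upd p j c) = f by rewrite free_upd // free_p.
have [T1 [dT1 sT1]] := IH _ (free_pj false).
have [T2 [dT2 sT2]] := IH _ (free_pj true).
exists (Node (X j) T1 T2); split; last first.
  have : 0 < 2 ^ f by rewrite expn_gt0.
  by rewrite /= sT1 sT2 !free_pj free_p expnS; lia.
apply: dmst_node; rewrite ?closed_stable //.
- by apply/negP => /(closed_big free_pos).
- by rewrite mem_rcons inE mem_nth ?size_xs ?orbT.
- exact: free_x_in_vars.
- by rewrite branch_x //; apply: dmst_U.
- by rewrite branch_x //; apply: dmst_U.
Qed.

End Vn_search.

Theorem corollary4 (n : nat) (xs vs : seq var) (y a b : var) :
  size xs = n -> size vs = n ->
  uniq (xs ++ [:: y; a; b] ++ vs) ->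
  (exists T, dmst (rcons xs y) (Vn xs vs y a b) T /\ bt_size T = 2 ^ n - 1) /\
  (forall T, dmst (rcons xs y) (Vn xs vs y a b) T -> 2 ^ n - 1 <= bt_size T).
Proof.
move=> size_xs size_vs vars_uniq.
have start : restrict (Vn xs vs y a b) (closed_state xs vs y (fun _ => None) None) = Vn xs vs y a b.
  rewrite -[RHS]restrict_none; apply: eq_restrict => w.
  by rewrite /closed_state /state /forced; case: ifP => //; case: ifP => //; case: eqP.
split.
  have [T [dT sizeT]] := dmst_upper size_xs size_vs vars_uniq (fun _ => None) None.
  by exists T; rewrite -start -(free_none n).
move=> T dT; rewrite -(free_none n).
by apply: (dmst_lower size_xs size_vs vars_uniq dT (py := None)); rewrite start.
Qed.
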